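(* Let $\mathbb{S}^{D-1}$ be the unit sphere of $\mathbb{R}^D$ and take $\mathcal{X}=\mathbb{S}^{D-1}$. For any finite nonempty $\mathcal{X}_0\subseteq\mathbb{S}^{D-1}$, $F_\infty(\mathcal{X}_0)=1/\cos\gamma(\pm\mathcal{X}_0)$, where $\pm\mathcal{X}_0=\{\pm\boldsymbol{v}:\boldsymbol{v}\in\mathcal{X}_0\}$.
   Context: For $\boldsymbol{x}\in\mathbb{R}^D$ and finite $\mathcal{X}_0=\{\boldsymbol{v}_1,\dots,\boldsymbol{v}_m\}$, $f_\infty(\boldsymbol{x},\mathcal{X}_0):=\min_{\boldsymbol{c}\in\mathbb{R}^m}\|\boldsymbol{c}\|_1$ subject to $\boldsymbol{x}=\sum_{i}c_i\boldsymbol{v}_i$, with value $+\infty$ if infeasible; $F_\infty(\mathcal{X}_0):=\sup_{\boldsymbol{x}\in\mathbb{S}^{D-1}}f_\infty(\boldsymbol{x},\mathcal{X}_0)$. The covering radius of $\mathcal{V}\subseteq\mathbb{S}^{D-1}$ is $\gamma(\mathcal{V}):=\max_{\boldsymbol{w}\in\mathbb{S}^{D-1}}\min_{\boldsymbol{v}\in\mathcal{V}}\cos^{-1}\langle\boldsymbol{v},\boldsymbol{w}\rangle$. Convention: $1/0=+\infty$. *)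

From HB Require Import structures.
From mathcomp Require Import all_boot all_order all_algebra.
From mathcomp Require Import all_classical all_reals all_analysis.
Set Implicit Arguments. Unset Strict Implicit. Unset Printing Implicit Defensive.
Import Order.TTheory GRing.Theory Num.Theory.
Local Open Scope classical_set_scope.
Local Open Scope ring_scope.

Section Defs.
Variables (R : realType) (D : nat).

Definition dotv (u w : 'rV[R]_D) : R := (u *m w^T) 0 0.
Definition enorm (u : 'rV[R]_D) : R := Num.sqrt (dotv u u).

Definition sphere : set 'rV[R]_D := [set x | enorm x = 1].

(* f_oo(x, X0) = min ||c||_1 s.t. x = sum_i c_i v_i  (+oo if infeasible),
   X0 = {v_1,...,v_m} given by the family v *)
Definition f_inf (m : nat) (x : 'rV[R]_D) (v : 'I_m -> 'rV[R]_D) : \bar R :=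
  ereal_inf [set (\sum_(i < m) `|c i|)%:E
            | c in [set c : 'I_m -> R | x = \sum_(i < m) c i *: v i]].

Definition F_inf (m : nat) (v : 'I_m -> 'rV[R]_D) : \bar R :=
  ereal_sup [set f_inf x v | x in sphere].

Definition cov_radius (V : set 'rV[R]_D) : R :=
  sup [set inf [set acos (dotv u w) | u in V] | w in sphere].

Definition pm_set (m : nat) (v : 'I_m -> 'rV[R]_D) : set 'rV[R]_D :=
  [set u | exists i, u = v i \/ u = - v i].

End Defs.

Definition inv_ext (R : realType) (r : R) : \bar R :=
  if r == 0 then +oo%E else (r^-1)%:E.

(* Let h(w) = max_i |<v_i, w>| and r = min_{w in S} h(w), attained at some w0
   by compactness of the sphere.  As acos is decreasing, the point of +-X0
   closest to w is at angle acos h(w), so gamma(+-X0) = acos r.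
   Any representation w0 = sum_i c_i v_i gives 1 = <w0, w0> <= |c|_1 r, hence
   F >= 1/r (and F = +oo when r = 0).  Conversely, for r > 0 and x in S, r x
   lies in the symmetric convex hull of the v_i: otherwise its nearest point p
   in the hull leaves w = r x - p <> 0 with h(w) <= <w, p> < <w, r x> <= r |w|,
   contradicting r <= h(w / |w|). *)

From mathcomp Require Import all_boot all_order all_algebra.
From mathcomp Require Import all_classical all_reals all_analysis.
From mathcomp Require Import ring lra.
Import Order.TTheory GRing.Theory Num.Theory.
Import numFieldTopology.Exports numFieldNormedType.Exports.
Local Open Scope classical_set_scope.
Local Open Scope ring_scope.
Set Implicit Arguments. Unset Strict Implicit. Unset Printing Implicit Defensive.

Section DotProduct.
Variables (R : realType) (D : nat).
Implicit Types (u w x : 'rV[R]_D).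

Lemma dotvE u w : dotv u w = \sum_j u 0 j * w 0 j.
Proof. by rewrite /dotv mxE; apply: eq_bigr => j _; rewrite mxE. Qed.

Lemma dotvC u w : dotv u w = dotv w u.
Proof. by rewrite /dotv -[u *m _]trmxK trmx_mul trmxK mxE. Qed.

Lemma dotvDl u u' w : dotv (u + u') w = dotv u w + dotv u' w.
Proof. by rewrite /dotv mulmxDl mxE. Qed.

Lemma dotvZl a u w : dotv (a *: u) w = a * dotv u w.
Proof. by rewrite /dotv -scalemxAl mxE. Qed.

Lemma dotvNl u w : dotv (- u) w = - dotv u w.
Proof. by rewrite -scaleN1r dotvZl mulN1r. Qed.

Lemma dotvBl u u' w : dotv (u - u') w = dotv u w - dotv u' w.
Proof. by rewrite dotvDl dotvNl. Qed.

Lemma dotvDr u w w' : dotv u (w + w') = dotv u w + dotv u w'.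
Proof. by rewrite dotvC dotvDl !(dotvC u). Qed.

Lemma dotvZr a u w : dotv u (a *: w) = a * dotv u w.
Proof. by rewrite dotvC dotvZl dotvC. Qed.

Lemma dotvBr u w w' : dotv u (w - w') = dotv u w - dotv u w'.
Proof. by rewrite !(dotvC u) dotvBl. Qed.

Lemma dotv_suml m (c : 'I_m -> R) (v : 'I_m -> 'rV[R]_D) w :
  dotv (\sum_i c i *: v i) w = \sum_i c i * dotv (v i) w.
Proof.
elim/big_rec2: _ => [|i a b _ IH]; last by rewrite dotvDl dotvZl IH.
by rewrite /dotv mul0mx mxE.
Qed.

Lemma dotvv_ge0 u : 0 <= dotv u u.
Proof. by rewrite dotvE; apply: sumr_ge0 => j _; rewrite -expr2 sqr_ge0. Qed.

Lemma dotvv_eq0 u : dotv u u = 0 -> u = 0.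
Proof.
rewrite dotvE => /psumr_eq0P sq0; apply/matrixP => i j; rewrite ord1 mxE.
have /eqP : u 0 j * u 0 j = 0 by apply: sq0 => // k _; rewrite -expr2 sqr_ge0.
by rewrite mulf_eq0 orbb => /eqP.
Qed.

Lemma sphereE x : sphere x <-> dotv x x = 1.
Proof.
rewrite /sphere /enorm /=; split=> [x1|->]; last exact: sqrtr1.
by rewrite -[LHS]sqr_sqrtr ?dotvv_ge0 // x1 expr1n.
Qed.

Lemma sphere_dotv_le1 x w : sphere x -> sphere w -> `|dotv x w| <= 1.
Proof.
move=> /sphereE x1 /sphereE w1.
have := dotvv_ge0 (x - w); have := dotvv_ge0 (x + w).
rewrite !dotvBl !dotvBr !dotvDl !dotvDr x1 w1 (dotvC w x) ler_norml.
by move=> *; apply/andP; split; lra.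
Qed.

Lemma sphere_normalize w : 0 < dotv w w -> sphere ((Num.sqrt (dotv w w))^-1 *: w).
Proof.
move=> w0; apply/sphereE; rewrite dotvZl dotvZr mulrA -expr2 exprVn.
by rewrite sqr_sqrtr ?mulVf ?gt_eqF // ltW.
Qed.

Lemma dotv_le0_of_min w z :
  (forall t, 0 < t <= 1 -> dotv w w <= dotv (w - t *: z) (w - t *: z)) ->
  dotv w z <= 0.
Proof.
move=> wmin; rewrite leNgt; apply/negP => a0.
have Z0 := dotvv_ge0 z.
(* Small enough for the first-order decrease -2 t <w, z> to beat t^2 |z|^2. *)
pose t := Order.min 1 (dotv w z / (dotv z z + 1)).
have t0 : 0 < t by rewrite lt_min ltr01 divr_gt0 //; lra.
have t1 : t <= 1 by rewrite ge_min lexx.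
have tZ : t * (dotv z z + 1) <= dotv w z.
  by rewrite -ler_pdivlMr ?ge_min ?lexx ?orbT //; lra.
have := wmin t; rewrite t0 t1 => /(_ isT).
rewrite !dotvBl !dotvBr !dotvZl !dotvZr (dotvC z w).
nra.
Qed.

End DotProduct.

Lemma acos_le_acos (R : realType) (a b : R) :
  -1 <= a -> a <= b -> b <= 1 -> acos b <= acos a.
Proof.
move=> a1 ab b1.
have acos_in (x : R) : -1 <= x <= 1 -> acos x \in `[0, pi].
  by move=> x1; rewrite in_itv /= acos_ge0 ?acos_lepi.
have a_in : -1 <= a <= 1 by rewrite a1 (le_trans ab b1).
have b_in : -1 <= b <= 1 by rewrite b1 (le_trans a1 ab).
rewrite leNgt -(ltr_cos (acos_in a a_in) (acos_in b b_in)).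
by rewrite !acosK ?in_itv //= -leNgt.
Qed.

Section Continuity.
Variables (R : realType) (T : topologicalType).

Lemma continuous_sum (V : normedModType R) (I : Type) (r : seq I) (F : I -> T -> V) :
  (forall i, continuous (F i)) -> continuous (fun t => \sum_(i <- r) F i t).
Proof.
move=> Fc; elim: r => [|a r IH].
  by under eq_fun do rewrite big_nil; exact: cst_continuous.
under eq_fun do rewrite big_cons.
by move=> t; apply: continuousD; [exact: Fc|exact: IH].
Qed.

Lemma continuous_bigmax (I : Type) (r : seq I) (F : I -> T -> R) :
  (forall i, continuous (F i)) ->
  continuous (fun t => \big[Order.max/0]_(i <- r) F i t).
Proof.
move=> Fc; elim: r => [|a r IH].
  by under eq_fun do rewrite big_nil; exact: cst_continuous.
under eq_fun do rewrite big_cons.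
by move=> t; apply: continuous_max; [exact: Fc|exact: IH].
Qed.

End Continuity.

Section SphereCompact.
Variables (R : realType) (D : nat).

Lemma continuous_dotvr (u : 'rV[R]_D) : continuous (fun w => dotv u w).
Proof.
under eq_fun do rewrite dotvE.
by apply: continuous_sum => j w; apply: continuousM; [exact: cst_continuous|exact: coord_continuous].
Qed.

Lemma continuous_dotvv : continuous (fun w : 'rV[R]_D => dotv w w).
Proof.
under eq_fun do rewrite dotvE.
by apply: continuous_sum => j w; apply: continuousM; exact: coord_continuous.
Qed.

Lemma sphere_compact : compact (@sphere R D).
Proof.
apply: bounded_closed_compact.
  exists 1; split=> // M /= M1 x /sphereE x1.
  rewrite [leLHS]/Num.norm /= mx_normrE; apply: bigmax_le => [|[i j] _]; first lra.
  rewrite (ord1 i) /=; apply: le_trans (ltW M1).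
  have : x 0 j ^+ 2 <= 1.
    rewrite -x1 dotvE (bigD1 j) //= -expr2 lerDl.
    by apply: sumr_ge0 => k _; rewrite -expr2 sqr_ge0.
  by rewrite ler_norml => ?; apply/andP; split; nra.
have -> : @sphere R D = (fun w => dotv w w) @^-1` [set 1].
  by apply/seteqP; split=> w /sphereE.
by apply: closed_comp => [w _|]; [exact: continuous_dotvv|exact: closed_eq].
Qed.

End SphereCompact.

Section MaxAbsDot.
Variables (R : realType) (D m : nat) (v : 'I_m -> 'rV[R]_D).
Implicit Types (w : 'rV[R]_D).

Definition max_abs_dotv w := \big[Order.max/0]_(i < m) `|dotv (v i) w|.

Lemma le_max_abs_dotv w i : `|dotv (v i) w| <= max_abs_dotv w.
Proof. exact: le_bigmax. Qed.

Lemma max_abs_dotv_ge0 w : 0 <= max_abs_dotv w.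
Proof. by apply: bigmax_ge_id. Qed.

Lemma max_abs_dotv_le w M :
  0 <= M -> (forall i, `|dotv (v i) w| <= M) -> max_abs_dotv w <= M.
Proof. by move=> M0 vM; apply: bigmax_le. Qed.

Lemma max_abs_dotvZ k w : 0 <= k -> max_abs_dotv (k *: w) = k * max_abs_dotv w.
Proof.
move=> k0; rewrite /max_abs_dotv (big_endo (fun x => k * x)) ?mulr0 //.
  by apply: eq_bigr => i _; rewrite dotvZr normrM ger0_norm.
by move=> x y; rewrite maxr_pMr.
Qed.

Lemma continuous_max_abs_dotv : continuous max_abs_dotv.
Proof.
apply: continuous_bigmax => i w; apply: continuous_comp; first exact: continuous_dotvr.
exact: norm_continuous.
Qed.

Hypothesis m_gt0 : (0 < m)%N.

Lemma max_abs_dotv_attained w : exists i, max_abs_dotv w = `|dotv (v i) w|.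
Proof.
rewrite /max_abs_dotv; have [i _ ->] := @eq_bigmax _ _ _ 0 (Ordinal m_gt0) xpredT
  (fun i => `|dotv (v i) w|) isT (fun i _ => normr_ge0 _).
by exists i.
Qed.

Hypothesis v_sphere : forall i, sphere (v i).

Lemma max_abs_dotv_le1 w : sphere w -> max_abs_dotv w <= 1.
Proof.
by move=> wS; have [i ->] := max_abs_dotv_attained w; apply: sphere_dotv_le1.
Qed.

Lemma exists_min_max_abs_dotv :
  exists2 w0, sphere w0 & forall w, sphere w -> max_abs_dotv w0 <= max_abs_dotv w.
Proof.
have [w0 w0S w0min] := EVT_min_rV (ex_intro _ _ (v_sphere (Ordinal m_gt0)))
  (@sphere_compact R D) (continuous_subspaceT continuous_max_abs_dotv).
by exists w0 => [|w wS]; [rewrite -inE|apply: w0min; rewrite inE].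
Qed.

Lemma inf_acos_pm_set w : sphere w ->
  inf [set acos (dotv u w) | u in pm_set v] = acos (max_abs_dotv w).
Proof.
move=> wS; have h1 := max_abs_dotv_le1 wS; have h0 := max_abs_dotv_ge0 w.
set E := [set _ | _ in _].
have lbE : lbound E (acos (max_abs_dotv w)).
  move=> _ [u [i ui] <-].
  have /andP[lo1 up1] : -1 <= dotv (v i) w <= 1.
    by rewrite -ler_norml; exact: sphere_dotv_le1.
  have /andP[loh uph] : - max_abs_dotv w <= dotv (v i) w <= max_abs_dotv w.
    by rewrite -ler_norml; exact: le_max_abs_dotv.
  by case: ui => ->; rewrite ?dotvNl; apply: acos_le_acos; lra.
have Eh : E (acos (max_abs_dotv w)).
  have [i hi] := max_abs_dotv_attained w.
  have [vw0|vw0] := leP 0 (dotv (v i) w).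
    by exists (v i); [exists i; left|rewrite hi ger0_norm].
  by exists (- v i); [exists i; right|rewrite hi ltr0_norm // dotvNl].
apply/le_anti/andP; split; first by apply: ge_inf => //; exists (acos (max_abs_dotv w)).
by apply: lb_le_inf => //; exists (acos (max_abs_dotv w)).
Qed.

Lemma cov_radius_pm_set w0 : sphere w0 ->
  (forall w, sphere w -> max_abs_dotv w0 <= max_abs_dotv w) ->
  cov_radius (pm_set v) = acos (max_abs_dotv w0).
Proof.
move=> w0S w0min; rewrite /cov_radius.
set E := [set _ | _ in _].
have ubE : ubound E (acos (max_abs_dotv w0)).
  move=> _ [w wS <-]; rewrite inf_acos_pm_set //.
  by apply: acos_le_acos; rewrite ?w0min ?max_abs_dotv_le1 //; have := max_abs_dotv_ge0 w0; lra.
have Ew0 : E (acos (max_abs_dotv w0)) by exists w0 => //; rewrite inf_acos_pm_set.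
apply/le_anti/andP; split; first by apply: ge_sup => //; exists (acos (max_abs_dotv w0)).
by apply: ub_le_sup => //; exists (acos (max_abs_dotv w0)).
Qed.

End MaxAbsDot.

Section L1Ball.
Variables (R : realType) (D m : nat) (v : 'I_m -> 'rV[R]_D).
Implicit Types (c d : 'rV[R]_m).

Definition l1norm c := \sum_i `|c 0 i|.

Definition l1ball := [set c | l1norm c <= 1].

Lemma continuous_l1norm : continuous l1norm.
Proof.
apply: continuous_sum => i c; apply: continuous_comp; first exact: coord_continuous.
exact: norm_continuous.
Qed.

Lemma l1ball_compact : compact l1ball.
Proof.
apply: bounded_closed_compact.
  exists 1; split=> // M /= M1 c c1.
  rewrite [leLHS]/Num.norm /= mx_normrE; apply: bigmax_le => [|[i j] _]; first lra.
  rewrite (ord1 i) /=; apply: le_trans (ltW M1); apply: le_trans c1.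
  by rewrite /l1norm (bigD1 j) //= lerDl; apply: sumr_ge0.
apply: (@closed_comp _ _ _ [set x : R | x <= 1]); last exact: closed_le.
by move=> c _; apply: continuous_l1norm.
Qed.

Lemma l1ball_convex c d t : l1ball c -> l1ball d -> 0 <= t <= 1 ->
  l1ball (c + t *: (d - c)).
Proof.
rewrite /l1ball /l1norm /= => c1 d1 /andP[t0 t1].
apply: (@le_trans _ _ (\sum_i ((1 - t) * `|c 0 i| + t * `|d 0 i|))).
  apply: ler_sum => i _; rewrite !mxE.
  have -> : c 0 i + t * (d 0 i - c 0 i) = (1 - t) * c 0 i + t * d 0 i by ring.
  apply: le_trans (ler_normD _ _) _.
  by rewrite !normrM (ger0_norm t0) ger0_norm ?subr_ge0.
rewrite big_split /= -!mulr_sumr.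
have : (1 - t) * (\sum_i `|c 0 i|) <= 1 - t by rewrite ler_piMr ?subr_ge0.
have : t * (\sum_i `|d 0 i|) <= t by rewrite ler_piMr.
lra.
Qed.

Lemma l1ball_scale_delta s j : `|s| = 1 -> l1ball (s *: delta_mx 0 j).
Proof.
move=> s1; rewrite /l1ball /l1norm /= (bigD1 j) //= big1 ?addr0.
  by rewrite !mxE !eqxx mulr1 s1.
by move=> i /negbTE ij; rewrite !mxE ij andbF mulr0 normr0.
Qed.

Definition lincomb c := \sum_i c 0 i *: v i.

Lemma lincombD c d : lincomb (c + d) = lincomb c + lincomb d.
Proof. by rewrite /lincomb -big_split; apply: eq_bigr => i _; rewrite mxE scalerDl. Qed.

Lemma lincombZ k c : lincomb (k *: c) = k *: lincomb c.
Proof. by rewrite /lincomb scaler_sumr; apply: eq_bigr => i _; rewrite mxE scalerA. Qed.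

Lemma lincombB c d : lincomb (c - d) = lincomb c - lincomb d.
Proof. by rewrite lincombD -scaleN1r lincombZ scaleN1r. Qed.

Lemma lincomb_delta j : lincomb (delta_mx 0 j) = v j.
Proof.
rewrite /lincomb (bigD1 j) //= big1 ?addr0; first by rewrite mxE !eqxx scale1r.
by move=> i /negbTE ij; rewrite mxE ij andbF scale0r.
Qed.

Lemma continuous_lincomb : continuous lincomb.
Proof.
apply: continuous_sum => i c; apply: continuousZr_tmp.
exact: coord_continuous.
Qed.

End L1Ball.

Section L1Projection.
Variables (R : realType) (D m : nat) (v : 'I_m -> 'rV[R]_D).

Lemma exists_l1ball_projection (y : 'rV[R]_D) :
  exists2 c, l1ball c &
    forall j s, `|s| = 1 -> dotv (y - lincomb v c) (s *: v j - lincomb v c) <= 0.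
Proof.
pose dist2 c := dotv (y - lincomb v c) (y - lincomb v c).
have dist2_cont : continuous dist2.
  move=> c; apply: (@continuous_comp _ _ _ (fun c => y - lincomb v c) (fun z => dotv z z)).
    by apply: continuousB; [exact: cst_continuous|exact: continuous_lincomb].
  exact: continuous_dotvv.
have l1ball0 : l1ball (0 : 'rV[R]_m).
  by rewrite /l1ball /l1norm /= big1 // => i _; rewrite mxE normr0.
have [c cB cmin] := EVT_min_rV (ex_intro _ _ l1ball0) (@l1ball_compact R m)
  (continuous_subspaceT dist2_cont).
rewrite inE in cB; exists c => // j s s1.
apply: dotv_le0_of_min => t /andP[t0 t1].
have ct : l1ball (c + t *: (s *: delta_mx 0 j - c)).
  by apply: l1ball_convex; [|exact: l1ball_scale_delta|rewrite (ltW t0)].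
have := cmin _ (mem_set ct); rewrite /dist2 lincombD lincombZ lincombB lincombZ lincomb_delta.
by rewrite opprD addrA.
Qed.

Hypothesis m_gt0 : (0 < m)%N.

Lemma max_abs_dotv_le_of_obtuse (w p : 'rV[R]_D) :
  (forall j s, `|s| = 1 -> dotv w (s *: v j - p) <= 0) ->
  max_abs_dotv v w <= dotv w p.
Proof.
move=> obtuse.
have vj_le j : `|dotv (v j) w| <= dotv w p.
  have := obtuse j 1 (normr1 _); have := obtuse j (-1) (etrans (normrN 1) (normr1 _)).
  rewrite !dotvBr !dotvZr (dotvC w (v j)) ler_norml => *; apply/andP; split; lra.
by apply: max_abs_dotv_le => //; apply: le_trans (vj_le (Ordinal m_gt0)).
Qed.

Variable r : R.
Hypothesis r_gt0 : 0 < r.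
Hypothesis r_le : forall u, sphere u -> r <= max_abs_dotv v u.

Lemma scaled_sphere_in_l1hull x : sphere x -> exists2 c, l1ball c & r *: x = lincomb v c.
Proof.
move=> xS; have [c cB obtuse] := exists_l1ball_projection (r *: x).
exists c => //; apply/eqP; rewrite -subr_eq0; apply/eqP.
set p := lincomb v c in obtuse *; set w := r *: x - p in obtuse *.
apply: dotvv_eq0; apply/eqP; rewrite eq_le dotvv_ge0 andbT leNgt; apply/negP => w0.
set n := Num.sqrt (dotv w w); have n0 : 0 < n by rewrite sqrtr_gt0.
have wp := max_abs_dotv_le_of_obtuse obtuse.
have rn : n * r <= max_abs_dotv v w.
  rewrite -ler_pdivlMl // -max_abs_dotvZ ?invr_ge0 ?(ltW n0) //.
  exact: r_le (sphere_normalize w0).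
have wx : dotv w x <= n.
  rewrite -[n]mulr1 -ler_pdivrMl // -dotvZl.
  by have := sphere_dotv_le1 (sphere_normalize w0) xS; rewrite ler_norml => /andP[].
have rwx : r * dotv w x <= r * n by rewrite ler_pM2l.
have : dotv w (r *: x) = dotv w p + dotv w w by rewrite -dotvDr addrC subrK.
rewrite dotvZr; lra.
Qed.

End L1Projection.

Lemma inv_ext_le_f_inf (R : realType) (D m : nat) (v : 'I_m -> 'rV[R]_D) w :
  sphere w -> (inv_ext (max_abs_dotv v w) <= f_inf w v)%E.
Proof.
move=> /sphereE w1; apply: le_ereal_inf_tmp => _ [c /= wc <-].
have : 1 <= (\sum_i `|c i|) * max_abs_dotv v w.
  rewrite -w1 {1}wc dotv_suml mulr_suml; apply: ler_sum => i _.
  by apply: le_trans (ler_norm _) _; rewrite normrM ler_wpM2l ?le_max_abs_dotv.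
rewrite /inv_ext; case: eqP => [->|/eqP h0]; first by rewrite mulr0 ler10.
have h_gt0 : 0 < max_abs_dotv v w by rewrite lt_def h0 max_abs_dotv_ge0.
by rewrite lee_fin -ler_pdivrMr // div1r.
Qed.

Lemma f_inf_le_inv (R : realType) (D m : nat) (v : 'I_m -> 'rV[R]_D) (r : R) x :
  (0 < m)%N -> 0 < r -> (forall u, sphere u -> r <= max_abs_dotv v u) ->
  sphere x -> (f_inf x v <= (r^-1)%:E)%E.
Proof.
move=> m_gt0 r_gt0 r_le xS.
have [c cB rx] := scaled_sphere_in_l1hull m_gt0 r_gt0 r_le xS.
apply: ge_ereal_inf; exists (\sum_i `|r^-1 * c 0 i|)%:E.
  exists (fun i => r^-1 * c 0 i) => //=.
  rewrite -[x]scale1r -(mulVf (lt0r_neq0 r_gt0)) -scalerA rx scaler_sumr.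
  by apply: eq_bigr => i _; rewrite scalerA.
under eq_bigr do rewrite normrM.
rewrite lee_fin -mulr_sumr ger0_norm ?invr_ge0 ?(ltW r_gt0) //.
by rewrite -[leRHS]mulr1 ler_pM2l ?invr_gt0.
Qed.

Unset Implicit Arguments.
Theorem lemma5 (R : realType) (D m : nat) (v : 'I_m -> 'rV[R]_D) :
  (0 < m)%N -> injective v -> (forall i, (@sphere R D) (v i)) ->
  F_inf v = inv_ext (cos (cov_radius (pm_set v))).
Proof.
move=> m_gt0 _ v_sphere.
have [w0 w0S w0min] := exists_min_max_abs_dotv m_gt0 v_sphere.
rewrite (cov_radius_pm_set m_gt0 v_sphere w0S w0min).
set r := max_abs_dotv v w0.
have r_ge0 : 0 <= r := max_abs_dotv_ge0 v w0.
have r_le1 : r <= 1 := max_abs_dotv_le1 m_gt0 v_sphere w0S.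
rewrite acosK ?in_itv /= ?r_le1 ?andbT; last lra.
apply/le_anti/andP; split; last first.
  by apply: le_trans (inv_ext_le_f_inf v w0S) _; apply: ereal_sup_ubound; exists w0.
rewrite /inv_ext; case: eqP => [_|/eqP r_neq0]; first exact: leey.
apply: ge_ereal_sup => _ [x xS <-]; apply: f_inf_le_inv => //.
by rewrite lt_def r_neq0.
Qed.
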